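(* Let $n\ge3$ and $2\le k\le n-1$. An oriented cycle $\overrightarrow{C_n}$ for which $\{k\}$ is a distance set is $\{k\}$-antimagic if and only if it is unidirectional.
   Context: An oriented graph is a simple graph each of whose edges is given one direction (an arc $(u,v)$ goes from $u$ to $v$). For vertices $u,v$, $d(u,v)$ is the length of a shortest directed path from $u$ to $v$ ($d(u,u)=0$, $\infty$ if no path). A distance set of an oriented graph is a nonempty set $D$ of nonnegative integers each of which is a finite distance $d(u,v)$ for some pair of vertices. $N_D(v)=\{y : d(v,y)\in D\}$; for a bijection $f:V\to\{1,\dots,|V|\}$, $\omega_D(v)=\sum_{x\in N_D(v)}f(x)$ (empty sum $0$); $f$ is $D$-antimagic if distinct vertices have distinct $D$-weights, and the graph is $D$-antimagic if such an $f$ exists. An oriented cycle $\overrightarrow{C_n}$ is an orientation of the cycle on $v_1,\dots,v_n$. It is unidirectional if (up to relabeling) its arcs are $(v_i,v_{i+1})$, $1\le i\le n-1$, and $(v_n,v_1)$. *)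

From mathcomp Require Import all_boot.
Set Implicit Arguments. Unset Strict Implicit. Unset Printing Implicit Defensive.

(* Oriented cycle on the vertex set 'I_n (vertex i stands for v_{i+1}).
   The underlying cycle has edges {i, i+1 mod n}; the orientation [o i]
   says whether the edge {i, i+1} is directed i -> i+1 (true) or
   i+1 -> i (false). *)
Definition cycle_arc (n : nat) (o : 'I_n -> bool) : rel 'I_n :=
  fun u v => (o u && (v == ordS u)) || (~~ o v && (u == ordS v)).

(* Directed distance in a digraph given by an arc relation [e]:
   [is_dist e u v m] holds iff d(u,v) = m, i.e. there is a directed
   walk (path in the sense of mathcomp's [path]) of length m from u to v
   and none of smaller length (a shortest walk is a path). *)
Definition walk_of_len (T : finType) (e : rel T) (u v : T) (m : nat) : Prop :=
  exists p : seq T, [/\ path e u p, last u p = v & size p = m].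

Definition is_dist (T : finType) (e : rel T) (u v : T) (m : nat) : Prop :=
  walk_of_len e u v m /\ forall j, j < m -> ~ walk_of_len e u v j.

Definition distance_set (T : finType) (e : rel T) (D : nat -> Prop) : Prop :=
  (exists m, D m) /\ forall m, D m -> exists u v, is_dist e u v m.

Definition labeling (T : finType) (f : T -> nat) : Prop :=
  injective f /\ forall x, 1 <= f x <= #|T|.

Definition D_weight (T : finType) (e : rel T) (D : nat -> Prop)
  (f : T -> nat) (v : T) (w : nat) : Prop :=
  exists N : {set T},
    (forall y, y \in N <-> exists m, D m /\ is_dist e v y m) /\
    w = \sum_(x in N) f x.

Definition D_antimagic_labeling (T : finType) (e : rel T) (D : nat -> Prop)
  (f : T -> nat) : Prop :=
  labeling f /\
  forall u v wu wv, D_weight e D f u wu -> D_weight e D f v wv ->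
    u <> v -> wu <> wv.

Definition D_antimagic (T : finType) (e : rel T) (D : nat -> Prop) : Prop :=
  exists f : T -> nat, D_antimagic_labeling e D f.

(* Unidirectional: up to relabeling of the vertices, the arcs are
   (v_i, v_{i+1}) and (v_n, v_1); i.e. isomorphic to the directed cycle. *)
Definition unidirectional (n : nat) (e : rel 'I_n) : Prop :=
  exists s : 'I_n -> 'I_n, bijective s /\
    forall u v, e u v = (s v == ordS (s u)).

(** A unidirectional cycle is a rotation in disguise: every vertex has
    exactly one vertex at distance [k], namely its [k]-th successor, and
    these are pairwise distinct, so any labeling is [{k}]-antimagic.
    Conversely, if the orientation is not constant, some arc [i -> i+1]
    is followed by an arc [i+1 <- i+2], making [i+1] a sink. A neighbour
    of that sink, or a second sink further along the cycle, is another
    vertex from which no walk of length 2 starts. For [k >= 2] both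
    vertices have empty [k]-neighbourhood, hence the same weight [0].
    A constant orientation is unidirectional (reversed via [rev_ord] when
    all arcs point backwards). *)

From mathcomp Require Import all_boot zmodp.
From mathcomp Require Import zify.
Set Implicit Arguments. Unset Strict Implicit. Unset Printing Implicit Defensive.

Lemma inZpS n a : ordS (inZp a : 'I_n.+1) = inZp a.+1.
Proof. by apply: val_inj; rewrite /= -addn1 modnDml addn1. Qed.

Lemma inZp_pred n a : ord_pred (inZp a.+1 : 'I_n.+1) = inZp a.
Proof. by rewrite -inZpS ordSK. Qed.

Lemma inZpDr n a : inZp (a + n.+1) = inZp a :> 'I_n.+1.
Proof. by apply: val_inj; rewrite /= modnDr. Qed.

Lemma inZp_addn_neq n a d : 0 < d < n.+1 -> inZp a != inZp (a + d) :> 'I_n.+1.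
Proof.
move=> /andP[d_gt0 d_lt]; apply/eqP => /(congr1 val) /= /eqP.
by rewrite -{1}[a]addn0 eqn_modDl mod0n modn_small // => /eqP d0; rewrite -d0 in d_gt0.
Qed.

Section Unidirectional.

Variables (n : nat) (e : rel 'I_n.+1) (s sinv : 'I_n.+1 -> 'I_n.+1).
Hypotheses (sK : cancel s sinv) (Ks : cancel sinv s).
Hypothesis eE : forall u v, e u v = (s v == ordS (s u)).

Lemma last_path_rotation u q : path e u q -> s (last u q) = inZp (s u + size q).
Proof.
elim: q u => [|x q IHq] u /=; first by rewrite addn0 valZpK.
rewrite eE => /andP[/eqP sx /IHq ->]; rewrite sx.
by apply: val_inj; rewrite /= modnDml addSnnS.
Qed.

Lemma exists_path_size u m : exists q, path e u q /\ size q = m.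
Proof.
elim: m => [|m [q [pq <-]]]; first by exists [::].
exists (rcons q (sinv (ordS (s (last u q))))).
by rewrite rcons_path pq eE Ks eqxx size_rcons.
Qed.

Definition rotation (k : nat) (u : 'I_n.+1) := sinv (inZp (s u + k)).

Lemma rotation_inj k : injective (rotation k).
Proof.
move=> u v /(can_inj Ks) /(congr1 val) /= /eqP.
by rewrite eqn_modDr !modn_small // => /eqP /val_inj /(can_inj sK).
Qed.

Lemma is_dist_rotation k u y : k < n.+1 -> is_dist e u y k <-> y = rotation k u.
Proof.
move=> k_lt; split.
  by move=> [[q [pq <- <-]] _]; rewrite /rotation -(last_path_rotation pq) sK.
move=> ->; split.
  have [q [pq sq]] := exists_path_size u k.
  by exists q; rewrite /rotation -sq -(last_path_rotation pq) sK.
move=> j j_lt [q [pq lq sq]].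
move: (last_path_rotation pq); rewrite lq Ks sq => /(congr1 val) /= /eqP.
rewrite eqn_modDl !modn_small ?(ltn_trans j_lt) // => /eqP kj.
by rewrite kj ltnn in j_lt.
Qed.

Lemma D_weight_rotation k f u w :
  k < n.+1 -> D_weight e (fun m => m = k) f u w -> w = f (rotation k u).
Proof.
move=> k_lt [N [Nu ->]].
suff -> : N = [set rotation k u] by rewrite big_set1.
apply/setP => y; rewrite in_set1; apply/idP/eqP.
  by move=> /Nu [m [-> /is_dist_rotation]]; apply.
by move=> ->; apply/Nu; exists k; split=> //; apply/is_dist_rotation.
Qed.

End Unidirectional.

Lemma unidirectional_antimagic n k (e : rel 'I_n.+1) :
  k < n.+1 -> unidirectional e -> D_antimagic e (fun m => m = k).
Proof.
move=> k_lt [s [[sinv sK Ks] eE]].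
exists (fun x => (val x).+1); split.
  split; first by move=> x y /succn_inj /val_inj.
  by move=> x; rewrite card_ord /= ltn_ord.
move=> u v wu wv /(D_weight_rotation sK Ks eE k_lt) -> /(D_weight_rotation sK Ks eE k_lt) ->.
by move=> uv /succn_inj /val_inj /(rotation_inj sK Ks) /uv.
Qed.

Lemma rev_ordS n (u : 'I_n.+1) : rev_ord (ordS u) = ord_pred (rev_ord u).
Proof.
apply: val_inj => /=; have u_lt := ltn_ord u.
case: (ltngtP u n) => [u_n|n_u|->]; last by rewrite modnn subnn add0n modn_small ?subn1.
  have -> : (n.+1 - u.+1 + n.+1).-1 = n - u.+1 + n.+1 by lia.
  by rewrite modnDr !modn_small //; lia.
by lia.
Qed.

Lemma unidirectional_const n (o : 'I_n.+1 -> bool) b :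
  (forall x, o x = b) -> unidirectional (cycle_arc o).
Proof.
move=> ob; rewrite /cycle_arc; case: b ob => ob.
  by exists id; split=> [|u v]; [exists id | rewrite !ob orbF].
exists (@rev_ord n.+1); split=> [|u v]; first by exists (@rev_ord _); apply: rev_ordK.
rewrite !ob /= -[rev_ord v == _](inj_eq (@ord_pred_inj _)) ordSK -rev_ordS.
by rewrite (inj_eq (@rev_ord_inj _)) eq_sym.
Qed.

Definition no_walk2 (T : finType) (e : rel T) (u : T) := forall x y, e u x -> ~~ e x y.

Lemma no_walk2_D_weight (T : finType) (e : rel T) k f u :
  2 <= k -> no_walk2 e u -> D_weight e (fun m => m = k) f u 0.
Proof.
move=> k_ge2 eu; exists set0; split; last by rewrite big_set0.
move=> y; rewrite in_set0; split=> // [[m [-> [[q [pq _ sq]] _]]]].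
case: q pq sq => [|x [|y' q]] /=; try by move=> _ sq; rewrite -sq in k_ge2.
by move=> /and3P[ux xy _]; case/negP: (eu x y' ux).
Qed.

Lemma exists_switch (g : nat -> bool) a d : g a -> ~~ g (a + d) ->
  exists2 c, a <= c < a + d & g c && ~~ g c.+1.
Proof.
elim: d a => [|d IHd] a ga; first by rewrite addn0 ga.
case gS: (g a.+1) => gad.
  have [|c /andP[ac cd] gc] := IHd a.+1 gS; first by rewrite addSnnS.
  by exists c => //; apply/andP; split; lia.
by exists a; [apply/andP; split; lia | rewrite ga gS].
Qed.

Section NonConstantOrientation.

Variables (n : nat) (o : 'I_n.+1 -> bool).
Local Notation E := (cycle_arc o).

Definition sink (w : 'I_n.+1) := ~~ o w && o (ord_pred w).

Lemma sink_no_arc w y : sink w -> ~~ E w y.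
Proof.
move=> /andP[ow opw]; rewrite /cycle_arc (negbTE ow) /=.
by apply/andP=> [[oy /eqP wS]]; rewrite wS ordSK (negbTE oy) in opw.
Qed.

Lemma sink_no_walk2 w : sink w -> no_walk2 E w.
Proof. by move=> /sink_no_arc wE x y; rewrite (negbTE (wE x)). Qed.

Lemma no_walk2_next_sinks u :
  (o u -> sink (ordS u)) -> (~~ o (ord_pred u) -> sink (ord_pred u)) -> no_walk2 E u.
Proof.
move=> sinkS sinkP x y /orP[/andP[ou /eqP ->]|/andP[ox /eqP uS]].
  exact/sink_no_arc/sinkS.
have xP : x = ord_pred u by rewrite uS ordSK.
by rewrite xP in ox *; apply/sink_no_arc/sinkP.
Qed.

Lemma switch_sink c : o (inZp c) -> ~~ o (inZp c.+1) -> sink (inZp c.+1).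
Proof. by move=> oc ocS; rewrite /sink inZp_pred ocS. Qed.

Lemma two_no_walk2 : 2 <= n -> (exists i, o i) -> (exists j, ~~ o j) ->
  exists u v, [/\ u <> v, no_walk2 E u & no_walk2 E v].
Proof.
move=> n_ge2 [i oi] [j oj].
pose g a := o (inZp a).
have gi : g i by rewrite /g valZpK.
have gj : ~~ g (i + (j + n.+1 - i)).
  rewrite subnKC; last by have := ltn_ord i; lia.
  by rewrite /g inZpDr valZpK.
have [c _ /andP[gc gcS]] := exists_switch gi gj.
have sink_c := switch_sink gc gcS.
have neqS a : inZp a <> inZp a.+1 :> 'I_n.+1.
  by apply/eqP; rewrite -[a.+1]addn1 inZp_addn_neq //; lia.
case gP: (g (c + n)).
  (* the arc into [c] from [c - 1] leaves [c -> c + 1] as its only out-arc *)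
  exists (inZp c), (inZp c.+1); split=> //; last exact: sink_no_walk2.
  apply: no_walk2_next_sinks; first by rewrite inZpS.
  by rewrite -inZpDr addnS inZp_pred [o _]gP.
case gSS: (g c.+2).
  (* the arcs switch back somewhere strictly between [c + 2] and [c + n] *)
  have gn : ~~ g (c.+2 + (n - 2)).
    by rewrite (_ : c.+2 + (n - 2) = c + n) ?gP //; lia.
  have [c' /andP[c_le c'_lt] /andP[gc' gc'S]] := exists_switch gSS gn.
  exists (inZp c.+1), (inZp c'.+1); split; last 2 first.
  - exact: sink_no_walk2.
  - exact/sink_no_walk2/switch_sink.
  by apply/eqP; rewrite (_ : c'.+1 = c.+1 + (c' - c)) ?inZp_addn_neq //; lia.
exists (inZp c.+2), (inZp c.+1); split; first by move/esym/neqS.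
  by apply: no_walk2_next_sinks; rewrite ?inZp_pred // [o _]gSS.
exact: sink_no_walk2.
Qed.

End NonConstantOrientation.

Theorem mainTheorem9 (n k : nat) (o : 'I_n -> bool) :
  3 <= n -> 2 <= k <= n - 1 ->
  distance_set (cycle_arc o) (fun m => m = k) ->
  (D_antimagic (cycle_arc o) (fun m => m = k) <-> unidirectional (cycle_arc o)).
Proof.
case: n o => [//|n] o n_ge3 /andP[k_ge2 k_le] _; split; last first.
  by apply: unidirectional_antimagic; lia.
move=> [f [_ f_anti]].
case: (boolP [forall x, o x]) => [/forallP oT|/forallPn [j oj]].
  by apply: (unidirectional_const (b:=true)) => x; apply: oT.
case: (boolP [forall x, ~~ o x]) => [/forallP oF|/forallPn [i /negPn oi]].
  by apply: (unidirectional_const (b:=false)) => x; apply/negbTE/oF.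
have n_ge2 : 2 <= n by lia.
have [u [v [uv u_free v_free]]] := two_no_walk2 n_ge2 (ex_intro _ i oi) (ex_intro _ j oj).
by case: (f_anti u v 0 0 (no_walk2_D_weight f k_ge2 u_free)
  (no_walk2_D_weight f k_ge2 v_free) uv).
Qed.
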